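(* For integers $n,m\ge 3$, ${\rm dim}_s(K_{n,n}^{-M}\diamond K_{m,m}^{-M})=3nm$.
   Context: The modular product $G\diamond H$ has vertex set $V(G)\times V(H)$; distinct vertices $(g,h)$ and $(g',h')$ are adjacent iff ($g=g'$ and $hh'\in E(H)$), or ($gg'\in E(G)$ and $h=h'$), or ($gg'\in E(G)$ and $hh'\in E(H)$), or ($g\neq g'$, $h\neq h'$, $gg'\notin E(G)$ and $hh'\notin E(H)$). $K_{n,n}^{-M}$ is $K_{n,n}$ with a perfect matching removed. ${\rm dim}_s(X)$ is the strong metric dimension: the minimum size of $S\subseteq V(X)$ such that for all distinct $x,y$ some $z\in S$ has $d_X(y,z)=d_X(y,x)+d_X(x,z)$ or $d_X(x,z)=d_X(x,y)+d_X(y,z)$. *)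

From mathcomp Require Import all_boot.
Set Implicit Arguments. Unset Strict Implicit. Unset Printing Implicit Defensive.

Fixpoint walkb (T : finType) (e : rel T) (k : nat) (x y : T) : bool :=
  match k with
  | 0 => x == y
  | k'.+1 => [exists z, e x z && walkb e k' z y]
  end.

(* Graph distance: least k (< #|T|) with a walk of length k from x to y;
   #|T| (a stand-in for infinity) if y is unreachable from x. *)
Definition gdist (T : finType) (e : rel T) (x y : T) : nat :=
  find (fun k => walkb e k x y) (iota 0 #|T|).

Definition strong_resolving (T : finType) (e : rel T) (S : {set T}) : bool :=
  [forall x : T, forall y : T, (x != y) ==>
    [exists z in S,
      (gdist e y z == gdist e y x + gdist e x z) ||
      (gdist e x z == gdist e x y + gdist e y z)]].

(* Strong metric dimension: minimum size of a strong resolving set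
   (the full vertex set is always strong resolving, so this is a genuine min). *)
Definition sdim (T : finType) (e : rel T) : nat :=
  find (fun k => [exists S : {set T}, strong_resolving e S && (#|S| == k)])
       (iota 0 #|T|.+1).

Definition modprod (T1 T2 : finType) (g : rel T1) (h : rel T2) :
    rel (T1 * T2) :=
  fun u v =>
    [|| (u.1 == v.1) && h u.2 v.2,
        g u.1 v.1 && (u.2 == v.2),
        g u.1 v.1 && h u.2 v.2
      | [&& u.1 != v.1, u.2 != v.2, ~~ g u.1 v.1 & ~~ h u.2 v.2]].

(* K_{n,n} minus a perfect matching: vertices (side, index); (s,i) ~ (t,j)
   iff s <> t and i <> j (the removed matching is {(false,i),(true,i)}). *)
Definition KnnM (n : nat) : rel (bool * 'I_n) :=
  fun u v => (u.1 != v.1) && (u.2 != v.2).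
Arguments KnnM n : clear implicits.

From mathcomp Require Import all_boot zify.
Set Implicit Arguments. Unset Strict Implicit. Unset Printing Implicit Defensive.

(* Write a vertex of the product as ((s, i), (t, j)), with side bits s, t.  Two
   distinct non-adjacent vertices have a common neighbour unless they are antipodal,
   i.e. differ only in one side bit; antipodal vertices are at distance 3.  The four
   vertices sharing the indices (i, j) are pairwise resolved only by themselves, so a
   strong resolving set misses at most one of them and has at least 3nm elements.
   Conversely the 3nm vertices with some side bit set strongly resolve the graph: two
   vertices with both side bits unset are resolved by the antipode of either one. *)

Lemma find_iota0_eq (P : pred nat) N k : k < N -> P k ->
  (forall k', k' < k -> ~~ P k') -> find P (iota 0 N) = k.
Proof.
move=> ltkN Pk minP; rewrite -(subnKC (ltnW ltkN)) iotaD find_cat size_iota.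
have -> : has P (iota 0 k) = false.
  by apply/hasPn => i; rewrite mem_iota add0n => /minP.
by move: ltkN; rewrite -subn_gt0 add0n; case: (N - k) => //= p _; rewrite Pk addn0.
Qed.

Section GraphDistance.
Variables (T : finType) (e : rel T).

Lemma walkb1 x y : walkb e 1 x y = e x y.
Proof.
by apply/existsP/idP => [[z /andP[exz /eqP <-]] | exy] //; exists y; rewrite exy eqxx.
Qed.

Lemma walkb2P x y : reflect (exists z, e x z && e z y) (walkb e 2 x y).
Proof.
apply: (iffP existsP) => -[z /andP[exz ezy]]; exists z; move: ezy.
  by rewrite -/(walkb e 1 z y) walkb1 exz.
by rewrite -/(walkb e 1 z y) walkb1 exz.
Qed.

Lemma walkb3 x z y : e x z -> walkb e 2 z y -> walkb e 3 x y.
Proof. by move=> exz wzy; apply/existsP; exists z; rewrite exz. Qed.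

Definition dist_upto3 x y : nat :=
  if x == y then 0 else if e x y then 1 else if walkb e 2 x y then 2 else 3.

Lemma gdist_upto3 x y : 3 < #|T| ->
  [|| x == y, e x y, walkb e 2 x y | walkb e 3 x y] ->
  gdist e x y = dist_upto3 x y.
Proof.
move=> T3 reach; rewrite /dist_upto3 /gdist.
have no1 : ~~ e x y -> ~~ walkb e 1 x y by rewrite walkb1.
case: eqP => [-> | /eqP nxy].
  by apply: find_iota0_eq => //=; exact: leq_ltn_trans _ T3.
case: ifP => exy.
  by apply: find_iota0_eq => [||[|//]]; rewrite ?walkb1 //; exact: leq_ltn_trans _ T3.
case: ifP => w2.
  by apply: find_iota0_eq => [||[|[|//]] _] //; [exact: leq_ltn_trans _ T3 | rewrite no1 ?exy].
apply: find_iota0_eq => [||[|[|[|//]]] _] //.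
- by move: reach; rewrite (negPf nxy) exy w2.
- by rewrite no1 ?exy.
- by rewrite w2.
Qed.

Definition sresolves z x y : bool :=
  (gdist e y z == gdist e y x + gdist e x z) ||
  (gdist e x z == gdist e x y + gdist e y z).

Lemma mem_strong_resolving_pair S x y :
  strong_resolving e S -> x != y ->
  (forall z, sresolves z x y -> (z == x) || (z == y)) -> (x \in S) || (y \in S).
Proof.
move=> /forallP /(_ x) /forallP /(_ y) /implyP Sres nxy only_xy.
by case/existsP: (Sres nxy) => z /andP[zS /only_xy /orP[] /eqP <-]; rewrite zS ?orbT.
Qed.

Lemma card_strong_resolving_fibres (U : finType) (f : T -> U) S :
  strong_resolving e S ->
  (forall x y, x != y -> f x = f y ->
     forall z, sresolves z x y -> (z == x) || (z == y)) ->
  #|T| <= #|S| + #|U|.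
Proof.
move=> Sres mmd; rewrite -(cardsC S) leq_add2l.
apply: (leq_trans _ (max_card (mem (f @: ~: S)))); rewrite card_in_imset //.
move=> x y; rewrite !inE => /negPf xS /negPf yS fxy; case: (eqVneq x y) => // nxy.
by have := mem_strong_resolving_pair Sres nxy (mmd x y nxy fxy); rewrite xS yS.
Qed.

Lemma sdim_eq S k :
  strong_resolving e S -> #|S| = k ->
  (forall S', strong_resolving e S' -> k <= #|S'|) -> sdim e = k.
Proof.
move=> Sres cardS minS; apply: find_iota0_eq.
- by rewrite ltnS -cardS max_card.
- by apply/existsP; exists S; rewrite Sres cardS eqxx.
- move=> k' ltk'; apply/existsP => -[S' /andP[S'res /eqP cardS']].
  by have := minS S' S'res; rewrite cardS' leqNgt ltk'.
Qed.

End GraphDistance.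

Lemma ord_avoid2 n (i j : 'I_n) : 3 <= n -> exists k : 'I_n, (k != i) && (k != j).
Proof.
move=> n3; have : 0 < #|~: [set i; j]|.
  by have := cardsC [set i; j]; rewrite card_ord cards2; case: (i != j); lia.
by case/card_gt0P => k; rewrite !inE negb_or; exists k.
Qed.

Ltac case_ord_eqs :=
  repeat match goal with
  | H : is_true (~~ (?a == ?a)) |- _ => by rewrite eqxx in H
  | |- context [?a == ?a] => rewrite eqxx
  | |- context [?a == ?b] =>
      is_var a; is_var b;
      let ab := fresh "ab" in
      case: (eqVneq a b) => ab;
      [ subst b
      | let ba := fresh "ba" in
        have ba : (b == a) = false by rewrite eq_sym (negPf ab);
        rewrite ?(negPf ab) ?ba ]
  end.

Definition vtx n m := ((bool * 'I_n) * (bool * 'I_m))%type.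

Definition adj n m : rel (vtx n m) := modprod (KnnM n) (KnnM m).
Arguments adj {n m}.

Definition antipodal n m (u v : vtx n m) : bool :=
  [&& u.1.1 != v.1.1, u.1.2 == v.1.2 & u.2 == v.2] ||
  [&& u.1 == v.1, u.2.1 != v.2.1 & u.2.2 == v.2.2].
Arguments antipodal {n m}.

Definition pdist n m (u v : vtx n m) : nat :=
  if u == v then 0 else if adj u v then 1 else if antipodal u v then 3 else 2.
Arguments pdist {n m}.

Ltac vtx_cases :=
  rewrite /adj /antipodal /modprod /KnnM /= ?xpair_eqE;
  repeat match goal with b : bool |- _ => destruct b end;
  rewrite /= ?xpair_eqE; case_ord_eqs; rewrite /=.

Lemma antipodalE n m (u v : vtx n m) : antipodal u v ->
  (v == ((~~ u.1.1, u.1.2), u.2)) || (v == (u.1, (~~ u.2.1, u.2.2))).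
Proof.
case: u v => [[su iu] [tu ju]] [[sv iv] [tv jv]].
by vtx_cases.
Qed.

Lemma antipodal_no_common_nb n m (u v w : vtx n m) :
  antipodal u v -> adj u w -> adj w v = false.
Proof.
case/antipodalE/orP => /eqP ->; case: u w => [[su iu] [tu ju]] [[sw iw] [tw jw]].
  by vtx_cases.
by vtx_cases.
Qed.

Lemma common_nb_witness n m (u v : vtx n m) (k : 'I_n) (l : 'I_m) :
  k != u.1.2 -> k != v.1.2 -> l != u.2.2 -> l != v.2.2 ->
  u != v -> ~~ adj u v -> ~~ antipodal u v ->
  let w1 := ((u.1.1, k), (u.2.1, l)) in let w2 := ((~~ u.1.1, u.1.2), (u.2.1, l)) in
  adj u w1 && adj w1 v || adj u w2 && adj w2 v.
Proof.
case: u v => [[su iu] [tu ju]] [[sv iv] [tv jv]] /=.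
by vtx_cases.
Qed.

Lemma antipodal_walk_witness n m (u v : vtx n m) (k : 'I_n) (l : 'I_m) :
  antipodal u v -> k != u.1.2 -> l != u.2.2 ->
  let w := ((u.1.1, k), (u.2.1, l)) in
  [&& adj u w, w != v, ~~ adj w v & ~~ antipodal w v].
Proof.
case/antipodalE/orP => /eqP ->; case: u => [[su iu] [tu ju]] /=.
  by vtx_cases.
by vtx_cases.
Qed.

Lemma walkb2_nonadj n m (u v : vtx n m) : 3 <= n -> 3 <= m ->
  u != v -> ~~ adj u v -> walkb adj 2 u v = ~~ antipodal u v.
Proof.
move=> n3 m3 uv nadj; apply/walkb2P/idP => [[w /andP[uw wv]] | nap].
  by apply/negP => /antipodal_no_common_nb/(_ uw); rewrite wv.
have [k /andP[ku kv]] := ord_avoid2 u.1.2 v.1.2 n3.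
have [l /andP[lu lv]] := ord_avoid2 u.2.2 v.2.2 m3.
by case/orP: (common_nb_witness ku kv lu lv uv nadj nap) => ?; eexists; eassumption.
Qed.

Lemma walkb3_antipodal n m (u v : vtx n m) : 3 <= n -> 3 <= m ->
  antipodal u v -> walkb adj 3 u v.
Proof.
move=> n3 m3 ap.
have [k /andP[ku _]] := ord_avoid2 u.1.2 u.1.2 n3.
have [l /andP[lu _]] := ord_avoid2 u.2.2 u.2.2 m3.
case/and4P: (antipodal_walk_witness ap ku lu) => uw wv nadj nap.
by apply: walkb3 uw _; rewrite walkb2_nonadj.
Qed.

Lemma card_vtx n m : #|{: vtx n m}| = 4 * n * m.
Proof. by rewrite !card_prod !card_bool !card_ord; lia. Qed.

Lemma gdist_pdist n m (u v : vtx n m) : 3 <= n -> 3 <= m ->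
  gdist adj u v = pdist u v.
Proof.
move=> n3 m3; rewrite gdist_upto3 ?card_vtx /dist_upto3 /pdist; last 2 first.
- nia.
- case: eqVneq => // uv; have [//|nadj] := boolP (adj u v).
  rewrite walkb2_nonadj //; case: (boolP (antipodal u v)) => // ap.
  by rewrite walkb3_antipodal ?orbT.
case: eqVneq => // uv; case: ifP => // /negbT nadj.
by rewrite walkb2_nonadj //; case: antipodal.
Qed.

Lemma pdist_fibre_resolves n m (x y z : vtx n m) :
  x != y -> x.1.2 = y.1.2 -> x.2.2 = y.2.2 ->
  (pdist y z == pdist y x + pdist x z) || (pdist x z == pdist x y + pdist y z) ->
  (z == x) || (z == y).
Proof.
case: x y z => [[sx i] [tx j]] [[sy i'] [ty j']] [[sz iz] [tz jz]] xy /= ei ej.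
by subst i' j'; rewrite /pdist; move: xy; vtx_cases.
Qed.

Lemma pdist_unflagged_resolves n m (ix iy : 'I_n) (jx jy : 'I_m) :
  let x := ((false, ix), (false, jx)) in let y := ((false, iy), (false, jy)) in
  x != y -> pdist y ((true, iy), (false, jy)) == pdist y x + pdist x ((true, iy), (false, jy)).
Proof. by rewrite /pdist; vtx_cases. Qed.

Lemma strong_resolving_card_lb n m (S : {set vtx n m}) : 3 <= n -> 3 <= m ->
  strong_resolving adj S -> 3 * n * m <= #|S|.
Proof.
move=> n3 m3 Sres.
have := card_strong_resolving_fibres (f := fun v : vtx n m => (v.1.2, v.2.2)) Sres.
rewrite card_vtx card_prod !card_ord => /(_ _) lb.
suff : 4 * n * m <= #|S| + n * m by lia.
apply: lb => x y xy [ei ej] z; rewrite /sresolves !gdist_pdist //.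
exact: pdist_fibre_resolves.
Qed.

Definition flagged n m : {set vtx n m} := [set v | v.1.1 || v.2.1].

Lemma card_flagged n m : #|flagged n m| = 3 * n * m.
Proof.
have unflagged : ~: flagged n m = [set ((false, p.1), (false, p.2)) | p : 'I_n * 'I_m].
  apply/setP => -[[s i] [t j]]; rewrite !inE /=.
  apply/idP/imsetP => [|[[i' j'] _ [-> _ -> _]] //].
  by case: s; case: t => // _; exists (i, j).
have := cardsC (flagged n m).
rewrite unflagged card_imset ?card_vtx ?card_prod ?card_ord; first lia.
by move=> [i j] [i' j'] [-> ->].
Qed.

Lemma flagged_strong_resolving n m : 3 <= n -> 3 <= m ->
  strong_resolving adj (flagged n m).
Proof.
move=> n3 m3; apply/forallP => x; apply/forallP => y; apply/implyP => xy.
have dxx (v : vtx n m) : gdist adj v v = 0 by rewrite gdist_pdist // /pdist eqxx.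
apply/existsP; case xS: (x \in flagged n m).
  by exists x; rewrite xS /sresolves dxx addn0 eqxx.
case yS: (y \in flagged n m).
  by exists y; rewrite yS /sresolves dxx addn0 eqxx orbT.
exists ((true, y.1.2), (false, y.2.2)); rewrite inE /= /sresolves !gdist_pdist //.
move: x y xy xS yS => [[[] ix] [[] jx]] [[[] iy] [[] jy]] xy; rewrite !inE //= => _ _.
by rewrite pdist_unflagged_resolves.
Qed.

Theorem mainTheorem14 (n m : nat) :
  3 <= n -> 3 <= m ->
  sdim (modprod (KnnM n) (KnnM m)) = 3 * n * m.
Proof.
move=> n3 m3; apply: (sdim_eq (flagged_strong_resolving n3 m3) (card_flagged n m)).
by move=> S; apply: strong_resolving_card_lb.
Qed.
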